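(* Let $G$ be a $2$-connected cubic graph endowed with a perfect-matching $4$-cover $\mathcal{P}=\{P_1,P_2,P_3,P_4\}$. (i) If $R$ is a $2$-edge-cut of $G$, then either both edges of $R$ are simply covered or both are doubly covered; moreover, they belong to the same members of $\mathcal{P}$ (either one or two). (ii) If $R$ is a $3$-edge-cut of $G$, then either exactly one or all three edges of $R$ are doubly covered; in the latter case there is $P_j\in\mathcal{P}$ with $R\subseteq P_j$.
   Context: Graphs are finite; loops and multiple edges are allowed. A perfect-matching $4$-cover of a cubic graph $G$ is a set of four perfect matchings $P_1,\dots,P_4$ of $G$ whose union is $E(G)$. An edge is simply covered if it belongs to exactly one $P_i$ and doubly covered if it belongs to exactly two. (In such a cover every vertex is incident with exactly one doubly covered edge and no edge is covered three or more times.) *)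

From mathcomp Require Import all_boot.
Set Implicit Arguments. Unset Strict Implicit. Unset Printing Implicit Defensive.

(* A finite multigraph (loops and parallel edges allowed): vertex type V,
   edge type E, and each edge e has endpoints (ends e).1 and (ends e).2;
   e is a loop iff the two endpoints coincide. *)
Section Graph.
Variables (V E : finType) (ends : E -> V * V).

Definition incident (v : V) (e : E) : bool :=
  ((ends e).1 == v) || ((ends e).2 == v).

Definition is_loop (e : E) : bool := (ends e).1 == (ends e).2.

(* degree: a loop contributes 2 *)
Definition degree (v : V) : nat :=
  #|[set e | (ends e).1 == v]| + #|[set e | (ends e).2 == v]|.

Definition cubic : Prop := forall v, degree v = 3.

Definition adj (u v : V) : bool :=
  [exists e, (ends e == (u, v)) || (ends e == (v, u))].

Definition connected_graph : Prop := forall u v, connect adj u v.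

Definition connected_minus (w : V) : Prop :=
  forall u v, u != w -> v != w ->
    connect (fun x y => [&& adj x y, x != w & y != w]) u v.

Definition two_connected : Prop :=
  2 < #|V| /\ connected_graph /\ forall w, connected_minus w.

Definition perfect_matching (M : {set E}) : Prop :=
  (forall e, e \in M -> ~~ is_loop e) /\
  (forall v, #|[set e in M | incident v e]| = 1).

Definition pm4_cover (P : 'I_4 -> {set E}) : Prop :=
  injective P /\ (forall i, perfect_matching (P i)) /\
  \bigcup_(i < 4) P i = [set: E].

Definition cov_count (P : 'I_4 -> {set E}) (e : E) : nat :=
  #|[set i | e \in P i]|.

Definition simply_covered P e : bool := cov_count P e == 1.
Definition doubly_covered P e : bool := cov_count P e == 2.

Definition edge_cut_of (X : {set V}) : {set E} :=
  [set e | ((ends e).1 \in X) != ((ends e).2 \in X)].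

Definition k_edge_cut (k : nat) (R : {set E}) : Prop :=
  exists X : {set V}, R = edge_cut_of X /\ #|R| = k.

End Graph.

From mathcomp Require Import all_boot zify.
Set Implicit Arguments. Unset Strict Implicit. Unset Printing Implicit Defensive.

(* Counting edge ends inside a vertex set X shows that a perfect matching meets
   the cut delta(X) in |X| edges modulo 2, and so does the whole edge set of a
   cubic graph; hence every member of the cover meets an edge cut R in |R|
   edges modulo 2.  At a vertex the coverages of the three incident edges add
   up to 4, so every edge is covered once or twice.  For a 2-edge-cut, each
   P_i therefore contains both edges of R or neither.  For a 3-edge-cut, each
   P_i contains one or all three edges of R, and counting the pairs (e, i)
   with e in R and e in P_i in two ways gives
     |R| + #doubly covered edges of R = 4 + 2 #{i | R ⊆ P_i}. *)

Lemma sum_nat_indicator (T : finType) (A : {pred T}) (p : pred T) :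
  \sum_(x in A) (p x : nat) = #|[set x in A | p x]|.
Proof.
rewrite -sum1_card big_mkcond [RHS]big_mkcond /=; apply: eq_bigr => x _.
by rewrite inE; case: (x \in A); case: (p x).
Qed.

Section Handshake.
Variables (V E : finType) (ends : E -> V * V).

Definition mdegree (M : {set E}) (v : V) : nat :=
  #|[set e in M | (ends e).1 == v]| + #|[set e in M | (ends e).2 == v]|.

Definition inner_edges (M : {set E}) (X : {set V}) : {set E} :=
  [set e in M | ((ends e).1 \in X) && ((ends e).2 \in X)].

Lemma degreeE v : degree ends v = mdegree [set: E] v.
Proof. by congr (_ + _); apply: eq_card => e; rewrite !inE. Qed.

Lemma mdegree_loopless (M : {set E}) v :
  {in M, forall e, ~~ is_loop ends e} ->
  mdegree M v = #|[set e in M | incident ends v e]|.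
Proof.
move=> loopless_M; rewrite /mdegree -cardsUI.
have -> : [set e in M | (ends e).1 == v] :&: [set e in M | (ends e).2 == v] = set0.
  apply/setP => e; rewrite !inE andbACA andbb.
  apply/negbTE/andP => -[/loopless_M + /andP[/eqP e1 /eqP e2]].
  by rewrite /is_loop e1 e2 eqxx.
by rewrite cards0 addn0; apply: eq_card => e; rewrite !inE -andb_orr.
Qed.

Lemma sum_card_fibres (M : {set E}) (X : {set V}) (g : E -> V) :
  \sum_(v in X) #|[set e in M | g e == v]| = #|[set e in M | g e \in X]|.
Proof.
rewrite -sum1_card (partition_big g (mem X)) => [|e]; last by rewrite !inE => /andP[].
apply: eq_bigr => v Xv; rewrite -sum1_card; apply: eq_bigl => e.
by rewrite !inE; case: eqP => [->|]; rewrite ?Xv ?andbT ?andbF.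
Qed.

Lemma handshake_edge_cut (M : {set E}) (X : {set V}) :
  \sum_(v in X) mdegree M v =
  #|M :&: edge_cut_of ends X| + (#|inner_edges M X|).*2.
Proof.
have -> : M :&: edge_cut_of ends X =
          [set e in M | ((ends e).1 \in X) != ((ends e).2 \in X)].
  by apply/setP => e; rewrite !inE.
rewrite big_split /= !sum_card_fibres -!sum_nat_indicator -muln2 big_distrl.
rewrite -!big_split /=; apply: eq_bigr => e _.
by case: ((ends e).1 \in X); case: ((ends e).2 \in X).
Qed.

Lemma odd_card_matching_cut (M : {set E}) (X : {set V}) :
  perfect_matching ends M -> odd #|M :&: edge_cut_of ends X| = odd #|X|.
Proof.
case=> loopless_M one_edge; have := handshake_edge_cut M X.
rewrite (eq_bigr (fun=> 1)) => [|v _]; last by rewrite mdegree_loopless.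
by rewrite sum1_card => ->; rewrite oddD odd_double addbF.
Qed.

Lemma odd_card_cubic_cut (X : {set V}) :
  cubic ends -> odd #|edge_cut_of ends X| = odd #|X|.
Proof.
move=> cubicG; have := handshake_edge_cut [set: E] X.
rewrite setTI (eq_bigr (fun=> 3)) => [|v _]; last by rewrite -degreeE.
by rewrite sum_nat_const => /(congr1 odd); rewrite oddD odd_double addbF oddM andbT.
Qed.

End Handshake.

Section Cover.
Variables (V E : finType) (ends : E -> V * V) (P : 'I_4 -> {set E}).

Lemma sum_cov_count (A : {set E}) :
  \sum_(e in A) cov_count P e = \sum_(i < 4) #|P i :&: A|.
Proof.
under eq_bigr => e _ do rewrite /cov_count -sum1dep_card big_mkcond /=.
rewrite exchange_big /=; apply: eq_bigr => i _.
rewrite setIC -sum_nat_indicator; apply: eq_bigr => e _.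
by case: (e \in P i).
Qed.

Hypothesis cubicG : cubic ends.
Hypothesis coverP : pm4_cover ends P.

Lemma cover_mem e : exists i, e \in P i.
Proof.
case: coverP => _ [_ coverE].
have /bigcupP[i _ Pie] : e \in \bigcup_(i < 4) P i by rewrite coverE inE.
by exists i.
Qed.

Lemma cover_loopless e : ~~ is_loop ends e.
Proof.
have [i Pie] := cover_mem e.
by case: coverP => _ [/(_ i)[loopless_Pi _] _]; exact: loopless_Pi.
Qed.

Lemma cov_count_gt0 e : 0 < cov_count P e.
Proof. by case: (cover_mem e) => i Pie; apply/card_gt0P; exists i; rewrite inE. Qed.

Lemma card_incident v : #|[set e | incident ends v e]| = 3.
Proof.
rewrite -(cubicG v) degreeE mdegree_loopless => [|e _]; last exact: cover_loopless.
by apply: eq_card => e; rewrite !inE.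
Qed.

Lemma sum_cov_count_incident v :
  \sum_(e in [set e | incident ends v e]) cov_count P e = 4.
Proof.
case: coverP => _ [matchingP _].
rewrite sum_cov_count (eq_bigr (fun=> 1)) ?sum1_card ?card_ord // => i _.
by rewrite -((matchingP i).2 v); apply: eq_card => e; rewrite !inE.
Qed.

Lemma cov_countE e : cov_count P e = (doubly_covered P e).+1.
Proof.
set I := [set x | incident ends (ends e).1 x].
have Ie : e \in I by rewrite inE /incident eqxx.
have others : 2 <= \sum_(x in I | x != e) cov_count P x.
  have <- : \sum_(x in I | x != e) 1 = 2.
    have : #|I| = 3 := card_incident _.
    rewrite sum1dep_card (cardsD1 e) Ie add1n => -[<-].
    by apply: eq_card => x; rewrite !inE andbC.
  by apply: leq_sum => x _; exact: cov_count_gt0.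
have := sum_cov_count_incident (ends e).1; rewrite -/I (bigD1 e) //= => sum4.
have : cov_count P e <= 2 by lia.
by rewrite /doubly_covered; case: (cov_count P e) (cov_count_gt0 e) => [|[|[|n]]].
Qed.

Lemma simply_coveredE e : simply_covered P e = ~~ doubly_covered P e.
Proof. by rewrite /simply_covered cov_countE; case: (doubly_covered P e). Qed.

Lemma odd_card_cover_cut i (X : {set V}) :
  odd #|P i :&: edge_cut_of ends X| = odd #|edge_cut_of ends X|.
Proof.
case: coverP => _ [matchingP _].
by rewrite odd_card_matching_cut ?odd_card_cubic_cut.
Qed.

Lemma two_edge_cut_mem i e f :
  e != f -> k_edge_cut ends 2 [set e; f] -> (e \in P i) = (f \in P i).
Proof.
move=> ef [X [cutX _]]; have := odd_card_cover_cut i X.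
rewrite -cutX cards2 ef setIC -sum_nat_indicator big_setU1 ?big_set1 ?inE //=.
by case: (e \in P i); case: (f \in P i).
Qed.

Lemma card_cover_three_cut i (R : {set E}) :
  k_edge_cut ends 3 R -> #|P i :&: R| = (R \subset P i).*2.+1.
Proof.
move=> [X [cutX R3]]; have := odd_card_cover_cut i X; rewrite -cutX R3.
case: (boolP (R \subset P i)) => [/setIidPr -> | not_sub]; first by rewrite R3.
have : #|P i :&: R| != 3.
  apply: contraNneq not_sub => PiR3; apply/setIidPr/eqP.
  by rewrite eqEcard subsetIr PiR3 R3.
have : #|P i :&: R| <= 3 by rewrite -R3 subset_leq_card ?subsetIr.
by case: #|P i :&: R| => [|[|[|[|n]]]].
Qed.

Lemma card_doubly_three_cut (R : {set E}) :
  k_edge_cut ends 3 R ->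
  #|[set e in R | doubly_covered P e]| = (#|[set i | R \subset P i]|).*2.+1.
Proof.
move=> cutR; have := sum_cov_count R.
under eq_bigr do rewrite cov_countE -add1n.
under [RHS]eq_bigr do rewrite card_cover_three_cut // -add1n -muln2.
have [X [_ R3]] := cutR.
rewrite !big_split /= sum1_card R3 sum_nat_indicator -big_distrl big_const_ord.
have -> : \sum_(i < 4) (R \subset P i : nat) = #|[set i | R \subset P i]|.
  by rewrite -sum1dep_card [RHS]big_mkcond; apply: eq_bigr => i _; case: (R \subset P i).
rewrite -muln2 => /= sum_eq; lia.
Qed.

End Cover.

Theorem lemma6p2 (V E : finType) (ends : E -> V * V) (P : 'I_4 -> {set E}) :
  cubic ends -> two_connected ends -> pm4_cover ends P ->
  (forall R : {set E}, k_edge_cut ends 2 R ->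
     forall e f, e != f -> R = [set e; f] ->
       ((simply_covered P e && simply_covered P f) \/
        (doubly_covered P e && doubly_covered P f)) /\
       (forall i, (e \in P i) = (f \in P i)))
  /\
  (forall R : {set E}, k_edge_cut ends 3 R ->
     (#|[set e in R | doubly_covered P e]| = 1 \/
      #|[set e in R | doubly_covered P e]| = 3) /\
     (#|[set e in R | doubly_covered P e]| = 3 -> exists j, R \subset P j)).
Proof.
move=> cubicG _ coverP; split=> R cutR.
- move=> e f ef defR; rewrite defR in cutR.
  have same_mem i : (e \in P i) = (f \in P i) := two_edge_cut_mem cubicG coverP i ef cutR.
  have same_cov : cov_count P e = cov_count P f.
    by apply: eq_card => i; rewrite !inE same_mem.
  split=> //; rewrite !(simply_coveredE cubicG coverP) /doubly_covered -same_cov.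
  by case: (cov_count P e == 2); [right | left].
- have doubly_le3 : #|[set e in R | doubly_covered P e]| <= 3.
    by case: cutR => X [_ <-]; apply/subset_leq_card/subsetP => e; rewrite inE => /andP[].
  move: doubly_le3; rewrite (card_doubly_three_cut cubicG coverP cutR).
  case k_eq: #|[set i | R \subset P i]| => [|[|k]] // _.
  + by split=> //; left.
  + split=> [|_]; first by right.
    have /card_gt0P[j] : 0 < #|[set i | R \subset P i]| by rewrite k_eq.
    by rewrite inE; exists j.
Qed.
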